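(* There exists an $\mathrm{RDGDD}(3,4,10\{2\})$.
   Context: A $\mathrm{GDD}(3,4,mv)$ of type $m^v$ is $(X,\mathcal{G},\mathcal{A})$ with $|X|=mv$, $\mathcal{G}$ a partition of $X$ into $v$ groups of size $m$, and $\mathcal{A}$ a set of $4$-subsets of $X$, each meeting every group in at most one point, such that every $3$-subset of $X$ with points in three distinct groups lies in exactly one block. For $x\in G\in\mathcal{G}$, the derived design $(X\setminus G,\mathcal{G}\setminus\{G\},\{A\setminus\{x\}:x\in A\in\mathcal{A}\})$ is a $\mathrm{GDD}(2,3,m(v-1))$ of type $m^{v-1}$ (each pair from distinct groups in exactly one triple). An $\mathrm{RDGDD}(3,4,v\{m\})$ is a $\mathrm{GDD}(3,4,mv)$ of type $m^v$ whose derived design at every point is resolvable, i.e., its blocks can be partitioned into parallel classes (sets of pairwise disjoint blocks covering $X\setminus G$). *)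

From mathcomp Require Import all_boot.
Set Implicit Arguments. Unset Strict Implicit. Unset Printing Implicit Defensive.

Section Designs.
Variable T : finType.

Definition GDD_3_4 (m v : nat) (G A : {set {set T}}) : Prop :=
  #|T| = m * v /\
  partition G [set: T] /\
  #|G| = v /\
  (forall g, g \in G -> #|g| = m) /\
  (forall B, B \in A -> #|B| = 4 /\ forall g, g \in G -> #|B :&: g| <= 1) /\
  (forall S : {set T}, #|S| = 3 -> (forall g, g \in G -> #|S :&: g| <= 1) ->
         exists! B, B \in A /\ S \subset B).

Definition derived_blocks (A : {set {set T}}) (x : T) : {set {set T}} :=
  [set B :\ x | B in A & x \in B].

Definition derived_points (G : {set {set T}}) (x : T) : {set T} :=
  [set: T] :\: pblock G x.

Definition parallel_class (Y : {set T}) (C : {set {set T}}) : Prop :=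
  trivIset C /\ cover C = Y.

Definition resolvable (Y : {set T}) (D : {set {set T}}) : Prop :=
  exists P : {set {set {set T}}},
    partition P D /\ forall C, C \in P -> parallel_class Y C.

Definition RDGDD_3_4 (m v : nat) (G A : {set {set T}}) : Prop :=
  GDD_3_4 m v G A /\
  forall x : T, resolvable (derived_points G x) (derived_blocks A x).

End Designs.

From mathcomp Require Import all_boot.
Set Implicit Arguments. Unset Strict Implicit. Unset Printing Implicit Defensive.

(* The design lives on Z_20 with the groups {i, i + 10}; its blocks are the
   240 translates of twelve base blocks.  Being invariant under translation,
   it has at every point x a derived design resolved by the translate by x of
   eight parallel classes of the derived design at 0.  All the defining
   conditions are finitely many and are checked by evaluation on sequences,
   then transferred to the set-level definitions. *)

Lemma count_eq1_uniq (T : eqType) (p : pred T) (s : seq T) x y :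
  count p s = 1 -> x \in s -> y \in s -> p x -> p y -> x = y.
Proof.
rewrite -size_filter => s_p1 xs ys px py.
have : x \in filter p s by rewrite mem_filter px xs.
have : y \in filter p s by rewrite mem_filter py ys.
by case: (filter p s) s_p1 => [|z []] //= _; rewrite !inE => /eqP -> /eqP ->.
Qed.

Lemma uniq_map_inj_in (T U : eqType) (f : T -> U) (s : seq T) :
  uniq (map f s) -> {in s &, injective f}.
Proof.
elim: s => //= a s IHs /andP[fa_s fs_uniq] x y.
rewrite !inE => /predU1P[->|xs] /predU1P[->|ys] // fxy.
- by rewrite fxy (map_f f ys) in fa_s.
- by rewrite -fxy (map_f f xs) in fa_s.
- exact: IHs.
Qed.

Lemma uniq_flatten_mem (T : eqType) (ss : seq (seq T)) s1 s2 x :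
  uniq (flatten ss) -> s1 \in ss -> s2 \in ss -> x \in s1 -> x \in s2 -> s1 = s2.
Proof.
elim: ss => //= s ss IHss; rewrite cat_uniq => /and3P[_ s_ss ss_uniq].
have s_notin t : t \in ss -> x \in t -> x \in s -> False.
  by move=> tss xt xs; case/negP: s_ss; apply/hasP; exists x => //; apply/flattenP; exists t.
rewrite !inE => /predU1P[->|s1ss] /predU1P[->|s2ss] // x1 x2.
- by case: (s_notin _ s2ss x2 x1).
- by case: (s_notin _ s1ss x1 x2).
- exact: IHss.
Qed.

Section Fibres.
Variables (T : finType) (rT : eqType) (f : T -> rT).
Local Notation fibres := (preim_partition f [set: T]).

Lemma pblock_fibres x : pblock fibres x = [set y | f x == f y].
Proof.
have f_equiv : {in [set: T] & &, equivalence_rel (fun x y => f x == f y)}.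
  by split=> // /eqP->.
by apply/setP => y; rewrite inE (pblock_equivalence_partition f_equiv) ?inE.
Qed.

Lemma fibreP g : g \in fibres -> exists x, g = [set y | f x == f y].
Proof. by case/imsetP => x _ ->; exists x; apply/setP => y; rewrite !inE. Qed.

Lemma fibre_mem x : [set y | f x == f y] \in fibres.
Proof.
by rewrite -pblock_fibres pblock_mem ?(cover_partition (preim_partitionP f _)) ?inE.
Qed.

Lemma card_fibres n : (forall x, #|[set y | f x == f y]| = n) -> #|T| = #|fibres| * n.
Proof.
move=> card_fibre; rewrite -cardsT.
by apply: card_uniform_partition (preim_partitionP f _) => _ /fibreP[x ->].
Qed.

Lemma meet_fibres_le1P (S : {set T}) :
  (forall g, g \in fibres -> #|S :&: g| <= 1) <-> {in S &, injective f}.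
Proof.
split=> [S_le1 x y xS yS fxy | f_inj g /fibreP[z ->]].
  have /card_le1_eqP S_x := S_le1 _ (fibre_mem x).
  by apply/esym/S_x; rewrite !inE ?fxy eqxx ?xS ?yS.
apply/card_le1_eqP => x y; rewrite !inE => /andP[xS /eqP fx] /andP[yS /eqP fy].
by apply: f_inj; rewrite // -fx -fy.
Qed.

End Fibres.

Section SetsOfSeqs.
Variable T : finType.

Definition set_of_seqs (ss : seq (seq T)) : {set {set T}} :=
  [set:: [seq [set:: s] | s <- ss]].

Lemma set_of_seqsP B ss :
  reflect (exists2 s, s \in ss & B = [set:: s]) (B \in set_of_seqs ss).
Proof. by rewrite inE; apply: (iffP mapP). Qed.

Lemma unique_block_of_count (bs : seq (seq T)) (S : {set T}) :
    count (fun b => all (mem b) (enum S)) bs = 1 ->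
  exists! B, B \in set_of_seqs bs /\ S \subset B.
Proof.
move=> S_once.
have S_sub b : (S \subset [set:: b]) = all (mem b) (enum S).
  apply/subsetP/allP => [S_b y|S_b y yS]; first by rewrite mem_enum => /S_b; rewrite inE.
  by rewrite inE; apply: S_b; rewrite mem_enum.
have /hasP[b b_bs S_b] : has (fun b => all (mem b) (enum S)) bs by rewrite has_count S_once.
exists [set:: b]; split; first by split; [apply/set_of_seqsP; exists b | rewrite S_sub].
move=> _ [/set_of_seqsP[b' b'bs ->]]; rewrite S_sub => S_b'.
by rewrite (count_eq1_uniq S_once b_bs b'bs S_b S_b').
Qed.

Lemma derived_blocks_set_of_seqs (bs : seq (seq T)) x :
  derived_blocks (set_of_seqs bs) x =
  set_of_seqs [seq [seq y <- b | y != x] | b <- bs & x \in b].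
Proof.
apply/setP => B; apply/imsetP/set_of_seqsP => [[_ /setIdP[/set_of_seqsP[b b_bs ->]]]|].
  rewrite inE => xb ->; exists [seq y <- b | y != x]; first by rewrite map_f // mem_filter xb.
  by apply/setP => y; rewrite !inE mem_filter andbC.
case=> t /mapP[b]; rewrite mem_filter => /andP[xb b_bs] -> ->.
exists [set:: b]; first by apply/setIdP; split; [apply/set_of_seqsP; exists b | rewrite inE].
by apply/setP => y; rewrite !inE mem_filter andbC.
Qed.

Lemma parallel_class_set_of_seqs (ys : seq T) (c : seq (seq T)) :
  uniq ys -> perm_eq (flatten c) ys -> parallel_class [set:: ys] (set_of_seqs c).
Proof.
move=> ys_uniq c_ys; have c_uniq : uniq (flatten c) by rewrite (perm_uniq c_ys).
split.
  apply/trivIsetP => _ _ /set_of_seqsP[t1 t1c ->] /set_of_seqsP[t2 t2c ->] t12.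
  rewrite -setI_eq0 -subset0; apply/subsetP => y; rewrite !inE => /andP[y1 y2].
  by rewrite (uniq_flatten_mem c_uniq t1c t2c y1 y2) eqxx in t12.
apply/setP => y; rewrite inE -(perm_mem c_ys).
apply/bigcupP/flattenP => [[_ /set_of_seqsP[t tc ->]]|[t tc yt]].
  by rewrite inE => yt; exists t.
by exists [set:: t]; [apply/set_of_seqsP; exists t | rewrite inE].
Qed.

End SetsOfSeqs.

Section Enumeration.
Variables (T : finType) (pts : seq T).
Hypotheses (pts_uniq : uniq pts) (mem_pts : forall x, x \in pts).

Lemma card_set_count (P : pred T) : #|[set y | P y]| = count P pts.
Proof.
rewrite -size_filter -(card_uniqP (filter_uniq P pts_uniq)).
by apply: eq_card => y; rewrite inE mem_filter mem_pts andbT.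
Qed.

(* Finite sets do not reduce under [vm_compute]; [canon s] is a normal form of
   the set of points of [s], so that equality of such sets becomes syntactic
   equality of sequences. *)
Definition canon (s : seq T) : seq T := [seq y <- pts | y \in s].

Lemma set_seq_canon s : [set:: canon s] = [set:: s].
Proof. by apply/setP => y; rewrite !inE mem_filter mem_pts andbT. Qed.

Lemma set_seq_canon_inj s1 s2 :
  [set:: canon s1] = [set:: canon s2] -> canon s1 = canon s2.
Proof.
rewrite !set_seq_canon => /setP s12; apply: eq_filter => y.
by have := s12 y; rewrite !inE.
Qed.

Lemma set_of_seqs_canon ss : set_of_seqs [seq canon s | s <- ss] = set_of_seqs ss.
Proof. by apply/setP => B; rewrite !inE -map_comp (eq_map set_seq_canon). Qed.

End Enumeration.

Section ResolutionFromSeqs.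
Variables (T : finType) (ds : seq (seq T)) (cs : seq (seq (seq T))).
Hypotheses (ds_uniq : uniq ds) (ds_set_inj : {in ds &, injective (fun t => [set:: t])}).
Hypotheses (cs_ds : perm_eq (flatten cs) ds) (cs_nil : [::] \notin cs).

Lemma partition_set_of_seqs :
  partition [set:: [seq set_of_seqs c | c <- cs]] (set_of_seqs ds).
Proof.
have cs_uniq : uniq (flatten cs) by rewrite (perm_uniq cs_ds).
apply/and3P; split.
- apply/eqP/setP => B; apply/bigcupP/set_of_seqsP => [[C]|[t]].
    rewrite inE => /mapP[c c_cs ->] /set_of_seqsP[t tc ->].
    by exists t; rewrite // -(perm_mem cs_ds); apply/flattenP; exists c.
  rewrite -(perm_mem cs_ds) => /flattenP[c c_cs tc] ->.
  by exists (set_of_seqs c); [rewrite inE map_f | apply/set_of_seqsP; exists t].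
- apply/trivIsetP => C1 C2; rewrite !inE => /mapP[c1 c1_cs ->] /mapP[c2 c2_cs ->] c12.
  rewrite -setI_eq0 -subset0; apply/subsetP => B; rewrite inE.
  case/andP => /set_of_seqsP[t1 t1c ->] /set_of_seqsP[t2 t2c t12].
  have t_ds t c : c \in cs -> t \in c -> t \in ds.
    by move=> c_cs tc; rewrite -(perm_mem cs_ds); apply/flattenP; exists c.
  have {}t12 : t1 = t2 := ds_set_inj (t_ds _ _ c1_cs t1c) (t_ds _ _ c2_cs t2c) t12.
  by rewrite t12 in t1c; rewrite (uniq_flatten_mem cs_uniq c1_cs c2_cs t1c t2c) eqxx in c12.
- rewrite inE; apply/negP => /mapP[[|t c] c_cs]; first by move: cs_nil; rewrite c_cs.
  move/setP/(_ [set:: t]); rewrite in_set0 => /esym/negbT/negP; apply.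
  by apply/set_of_seqsP; exists t; rewrite ?mem_head.
Qed.

Lemma resolvable_set_of_seqs (ys : seq T) :
    uniq ys -> {in cs, forall c, perm_eq (flatten c) ys} ->
  resolvable [set:: ys] (set_of_seqs ds).
Proof.
move=> ys_uniq cs_ys; exists [set:: [seq set_of_seqs c | c <- cs]].
split=> [|C]; first exact: partition_set_of_seqs.
by rewrite inE => /mapP[c c_cs ->]; apply: parallel_class_set_of_seqs (cs_ys c c_cs).
Qed.

End ResolutionFromSeqs.

Definition mod20 (n : nat) : 'I_20 := Ordinal (@ltn_pmod n 20 isT).

Definition points : seq 'I_20 := map mod20 (iota 0 20).

Lemma points_uniq : uniq points.
Proof. by vm_compute. Qed.

Lemma mem_points x : x \in points.
Proof.
apply/mapP; exists (val x); first by rewrite mem_iota ltn_ord.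
by apply: val_inj; rewrite /= modn_small.
Qed.

Lemma all_points (P : pred 'I_20) : all P points -> forall x, P x.
Proof. by move=> /allP P_points x; apply: P_points (mem_points x). Qed.

Definition shift (x : nat) (s : seq nat) : seq 'I_20 := [seq mod20 (x + i) | i <- s].

Definition group_of (x : 'I_20) : nat := x %% 10.

Definition groups : {set {set 'I_20}} := preim_partition group_of [set: 'I_20].

Definition base_blocks : seq (seq nat) :=
 [:: [:: 0; 1; 2; 16]; [:: 0; 1; 7; 8]; [:: 0; 1; 3; 4]; [:: 0; 1; 5; 9];
     [:: 0; 1; 6; 12]; [:: 0; 2; 6; 11]; [:: 0; 2; 4; 17]; [:: 0; 2; 7; 14];
     [:: 0; 2; 5; 8]; [:: 0; 3; 9; 12]; [:: 0; 3; 8; 16]; [:: 0; 2; 9; 13]].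

Definition blocks : seq (seq 'I_20) :=
  [seq shift t b | b <- base_blocks, t <- iota 0 20].

Definition block_set : {set {set 'I_20}} := set_of_seqs blocks.

Definition base_resolution : seq (seq (seq nat)) :=
 [:: [:: [:: 1; 2; 16]; [:: 3; 5; 7]; [:: 4; 9; 18]; [:: 6; 14; 15]; [:: 8; 11; 17]; [:: 12; 13; 19]];
     [:: [:: 1; 3; 4]; [:: 2; 5; 8]; [:: 6; 7; 19]; [:: 9; 11; 15]; [:: 12; 14; 17]; [:: 13; 16; 18]];
     [:: [:: 1; 5; 9]; [:: 2; 7; 14]; [:: 3; 6; 18]; [:: 4; 11; 13]; [:: 8; 12; 15]; [:: 16; 17; 19]];
     [:: [:: 1; 6; 12]; [:: 2; 3; 19]; [:: 4; 15; 16]; [:: 5; 13; 17]; [:: 7; 11; 18]; [:: 8; 9; 14]];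
     [:: [:: 1; 7; 8]; [:: 2; 9; 13]; [:: 3; 15; 17]; [:: 4; 5; 6]; [:: 11; 12; 16]; [:: 14; 18; 19]];
     [:: [:: 1; 13; 14]; [:: 2; 15; 18]; [:: 3; 8; 16]; [:: 4; 7; 12]; [:: 5; 11; 19]; [:: 6; 9; 17]];
     [:: [:: 1; 15; 19]; [:: 2; 4; 17]; [:: 3; 11; 14]; [:: 5; 12; 18]; [:: 6; 8; 13]; [:: 7; 9; 16]];
     [:: [:: 1; 17; 18]; [:: 2; 6; 11]; [:: 3; 9; 12]; [:: 4; 8; 19]; [:: 5; 14; 16]; [:: 7; 13; 15]]].

Definition resolution (x : 'I_20) : seq (seq (seq 'I_20)) :=
  [seq [seq canon points (shift x t) | t <- c] | c <- base_resolution].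

Definition derived_seqs (x : 'I_20) : seq (seq 'I_20) :=
  map (canon points) [seq [seq y <- b | y != x] | b <- blocks & x \in b].

Fact groups_of_size_two :
  all (fun x => count (fun y => group_of x == group_of y) points == 2) points.
Proof. by vm_compute. Qed.

Fact blocks_transversal : all (fun b => (size b == 4) && uniq (map group_of b)) blocks.
Proof. by vm_compute. Qed.

Fact transversal_triples_covered_once :
  all (fun a => all (fun b => all (fun c =>
    uniq (map group_of [:: a; b; c]) ==>
    (count (fun B => all (mem B) [:: a; b; c]) blocks == 1))
  points) points) points.
Proof. by vm_compute. Qed.

Fact resolution_valid :
  all (fun x =>
    [&& uniq (derived_seqs x), perm_eq (flatten (resolution x)) (derived_seqs x),
        [::] \notin resolution x &
        all (fun c =>
               perm_eq (flatten c) [seq y <- points | group_of y != group_of x])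
          (resolution x)])
  points.
Proof. by vm_compute. Qed.

Lemma card_group x : #|[set y | group_of x == group_of y]| = 2.
Proof.
rewrite (card_set_count points_uniq mem_points).
exact/eqP/(all_points groups_of_size_two).
Qed.

Lemma card_groups : #|groups| = 10.
Proof.
have := card_fibres card_group; rewrite card_ord -[20]/(10 * 2) => /eqP.
by rewrite eqn_mul2r => /eqP.
Qed.

Lemma block_set_blocks B :
  B \in block_set -> #|B| = 4 /\ forall g, g \in groups -> #|B :&: g| <= 1.
Proof.
case/set_of_seqsP => b b_blocks ->.
have /andP[/eqP size_b group_b] := allP blocks_transversal b b_blocks.
split; first by rewrite cardsE (card_uniqP (map_uniq group_b)).
by apply/meet_fibres_le1P => x y; rewrite !inE; apply: uniq_map_inj_in group_b x y.
Qed.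

Lemma block_set_triples (S : {set 'I_20}) :
    #|S| = 3 -> (forall g, g \in groups -> #|S :&: g| <= 1) ->
  exists! B, B \in block_set /\ S \subset B.
Proof.
move=> card_S /meet_fibres_le1P group_inj; apply: unique_block_of_count.
have group_S : uniq (map group_of (enum S)).
  by rewrite map_inj_in_uniq ?enum_uniq // => x y; rewrite !mem_enum; apply: group_inj.
move: card_S group_S; rewrite cardE; case: (enum S) => [|a [|b [|c []]]] // _ group_abc.
have := all_points (all_points (all_points transversal_triples_covered_once a) b) c.
by rewrite group_abc => /eqP.
Qed.

Lemma derived_points_groups x :
  derived_points groups x = [set:: [seq y <- points | group_of y != group_of x]].
Proof.
apply/setP => y; rewrite /derived_points pblock_fibres !inE andbT.
by rewrite mem_filter mem_points andbT eq_sym.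
Qed.

Lemma derived_blocks_block_set x :
  derived_blocks block_set x = set_of_seqs (derived_seqs x).
Proof.
by rewrite /derived_seqs (set_of_seqs_canon mem_points) derived_blocks_set_of_seqs.
Qed.

Lemma derived_resolvable x :
  resolvable (derived_points groups x) (derived_blocks block_set x).
Proof.
have /and4P[ds_uniq cs_ds cs_nil /allP cs_ys] := all_points resolution_valid x.
rewrite derived_points_groups derived_blocks_block_set.
apply: (@resolvable_set_of_seqs _ _ (resolution x) ds_uniq _ cs_ds cs_nil _ _ cs_ys).
  move=> t1 t2; rewrite /derived_seqs => /mapP[s1 _ ->] /mapP[s2 _ ->].
  exact: (set_seq_canon_inj mem_points).
by rewrite filter_uniq ?points_uniq.
Qed.

Theorem lemma3p7 :
  exists G A : {set {set 'I_20}}, RDGDD_3_4 2 10 G A.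
Proof.
exists groups, block_set; split; last exact: derived_resolvable.
split; first by rewrite card_ord.
split; first exact: preim_partitionP.
split; first exact: card_groups.
split; first by move=> g /fibreP[x ->]; exact: card_group.
split; [exact: block_set_blocks | exact: block_set_triples].
Qed.
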